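(* For every positive integer $n$, the number $A_n=\frac{8(10^{2^n}-1)}{9}$ (whose decimal representation consists of $2^n$ digits all equal to $8$) is a practical number.
   Context: A positive integer $N$ is called a practical number if every integer in $[1,N]$ can be expressed as a sum of distinct positive divisors of $N$. *)

From mathcomp Require Import all_boot.
Set Implicit Arguments. Unset Strict Implicit. Unset Printing Implicit Defensive.

(* A collection of distinct divisors is represented as a
   subsequence of the (duplicate-free, sorted) list [divisors N]. *)
Definition practical (N : nat) : Prop :=
  0 < N /\
  forall m : nat, 1 <= m <= N ->
    exists s : seq nat, subseq s (divisors N) /\ \sum_(d <- s) d = m.

Definition A (n : nat) : nat := 8 * (10 ^ (2 ^ n) - 1) %/ 9.

(* Call N 2-practical if every x < 2N is a sum of distinct divisors of N.
   If N is 2-practical and 0 < k <= 2N, then so is N k: write x = q k + r with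
   r < k and q < 2N, represent r by divisors d of N and q by divisors e of N;
   the divisors d stay below k <= e k, so together with the e k they form a
   set of distinct divisors of N k summing to x.  Since
   A_(n+1) = A_n (10^(2^n) + 1) with 10^(2^n) + 1 <= 2 A_n, and A_0 = 8 = 2^3
   is 2-practical, every A_n is 2-practical, hence practical. *)
From mathcomp Require Import all_boot.
From mathcomp Require Import zify.

Definition divisor_sum (N x : nat) : Prop :=
  exists2 s : seq nat, uniq s /\ {subset s <= divisors N} & \sum_(d <- s) d = x.

Definition practical2 (N : nat) : Prop :=
  0 < N /\ forall x, x < 2 * N -> divisor_sum N x.

Lemma mem_leq_sum (s : seq nat) d : d \in s -> d <= \sum_(i <- s) i.
Proof.
elim: s => [|a s IH] //=; rewrite in_cons big_cons => /orP [/eqP->|/IH le_d].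
  exact: leq_addr.
exact: leq_trans le_d (leq_addl _ _).
Qed.

Lemma divisors_gt0 N d : 0 < N -> d \in divisors N -> 0 < d.
Proof. by case: d => // N_gt0; rewrite -dvdn_divisors // dvd0n; case: N N_gt0. Qed.

Lemma divisor_sum_mul N k q r : 0 < N -> 0 < k -> r < k ->
  divisor_sum N r -> divisor_sum N q -> divisor_sum (N * k) (q * k + r).
Proof.
move=> N_gt0 k_gt0 r_lt_k [s1 [uniq_s1 sub_s1] sum_s1] [s2 [uniq_s2 sub_s2] sum_s2].
have Nk_gt0 : 0 < N * k by rewrite muln_gt0 N_gt0.
exists (s1 ++ [seq e * k | e <- s2]); first split.
- rewrite cat_uniq uniq_s1 map_inj_uniq ?uniq_s2 /=; last first.
    by move=> a b /eqP; rewrite eqn_pmul2r // => /eqP.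
  rewrite andbT; apply/hasPn => _ /mapP [e /sub_s2/(divisors_gt0 _ _ N_gt0) e_gt0 ->].
  apply: contraTN (r_lt_k) => /mem_leq_sum; rewrite sum_s1 -leqNgt => le_ek.
  by apply: leq_trans le_ek; rewrite leq_pmull.
- move=> y; rewrite mem_cat -!dvdn_divisors //.
  case/orP => [/sub_s1 | /mapP [e /sub_s2 e_div ->]].
    by rewrite -dvdn_divisors // => /dvdn_mulr->.
  by rewrite dvdn_pmul2r // dvdn_divisors.
- by rewrite big_cat big_map /= -big_distrl /= sum_s1 sum_s2 addnC.
Qed.

Lemma practical2_mul N k : practical2 N -> 0 < k <= 2 * N -> practical2 (N * k).
Proof.
move=> [N_gt0 repN] /andP [k_gt0 k_le]; split=> [|x x_lt]; first by rewrite muln_gt0 N_gt0.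
have r_lt_k := ltn_pmod x k_gt0.
rewrite (divn_eq x k); apply: divisor_sum_mul => //; apply: repN.
  exact: leq_trans r_lt_k k_le.
by rewrite ltn_divLR // -mulnA.
Qed.

Lemma practical2_1 : practical2 1.
Proof.
split=> // -[_ | [_ | //]]; first by exists [::]; rewrite ?big_nil.
by exists [:: 1]; rewrite ?big_seq1 //; split=> // d; rewrite inE => /eqP ->.
Qed.

Lemma practical2_exp2 m : practical2 (2 ^ m).
Proof.
elim: m => [|m IH]; first exact: practical2_1.
by rewrite expnSr; apply: practical2_mul; rewrite // leq_pmulr ?expn_gt0.
Qed.

Lemma practical2_practical N : practical2 N -> practical N.
Proof.
move=> [N_gt0 repN]; split=> // m /andP [_ m_le].
have [s [uniq_s sub_s] <-] := repN m (leq_ltn_trans m_le (ltn_Pmull (isT : 1 < 2) N_gt0)).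
exists [seq d <- divisors N | d \in s]; split; first exact: filter_subseq.
apply/perm_big/uniq_perm => [||y]; rewrite ?filter_uniq ?divisors_uniq //.
by rewrite mem_filter andb_idr // => /sub_s.
Qed.

Lemma dvdn_pow10_sub1 m : 9 %| 10 ^ m - 1.
Proof. by rewrite -eqn_mod_dvd ?expn_gt0 // -modnXm exp1n. Qed.

Lemma A_mul9 n : 9 * A n = 8 * (10 ^ 2 ^ n - 1).
Proof. by rewrite /A -muln_divA ?dvdn_pow10_sub1 // mulnCA [9 * _]mulnC divnK ?dvdn_pow10_sub1. Qed.

Lemma A_S n : A n.+1 = A n * (10 ^ 2 ^ n + 1).
Proof.
apply/eqP; rewrite -(eqn_pmul2l (isT : 0 < 9)) mulnA !A_mul9 expnS mul2n -addnn expnD.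
have : 0 < 10 ^ 2 ^ n by rewrite expn_gt0.
move: (10 ^ 2 ^ n) => t t_gt0; apply/eqP; nia.
Qed.

Lemma pow10_le_2A n : 10 ^ 2 ^ n + 1 <= 2 * A n.
Proof.
have : 10 <= 10 ^ 2 ^ n by rewrite -{1}(expn1 10) leq_exp2l // expn_gt0.
have := A_mul9 n; lia.
Qed.

Theorem mainTheorem9 (n : nat) : 0 < n -> practical (A n).
Proof.
move=> _; apply: practical2_practical.
elim: n => [|n IH]; first exact: (practical2_exp2 3).
by rewrite A_S; apply: practical2_mul; rewrite // pow10_le_2A andbT addn1.
Qed.
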